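(* Consider the $T$-stage game $\Gamma_T(p,q)$, and let $x\in X_T(p)$ and $y\in Y_T(q)$ be realization plans of players 1 and 2. For every $l\in L$ and $k\in K$: at $t=0$, $$u_{l,0}(x)=\min_{\tau\in\Delta(B)}\Big(\sum_{k\in K}x_{k,\emptyset,\emptyset}^TM^{kl}+\mathbf 1^Tu_{l,\emptyset,\emptyset}(x)\Big)\tau,\qquad w_{k,0}(y)=\max_{\sigma\in\Delta(A)}\sigma^T\Big(\sum_{l\in L}M^{kl}y_{l,\emptyset,\emptyset}+w_{k,\emptyset,\emptyset}(y)\mathbf1\Big),$$ and for every $t=1,\dots,T-1$, $h^A\in A^{t-1}$, $h^B\in B^{t-1}$, $a\in A$, $b\in B$, $$u^{a,b}_{l,h^A,h^B}(x)=\min_{\tau\in\Delta(B)}\Big(\sum_{k\in K}x_{k,(h^A,a),(h^B,b)}^TM^{kl}+\mathbf1^Tu_{l,(h^A,a),(h^B,b)}(x)\Big)\tau,$$ $$w^{a,b}_{k,h^A,h^B}(y)=\max_{\sigma\in\Delta(A)}\sigma^T\Big(\sum_{l\in L}M^{kl}y_{l,(h^A,a),(h^B,b)}+w_{k,(h^A,a),(h^B,b)}(y)\mathbf1\Big).$$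
   Context: Setting: nonempty finite type sets $K,L$, action sets $A,B$, payoff $M:K\times L\times A\times B\to\mathbb R$ with $M^{kl}=(M(k,l,a,b))_{a,b}$ an $|A|\times|B|$ matrix; $p\in\Delta(K),q\in\Delta(L)$ with positive entries; $\mathbf 1$ all-ones vector. In $\Gamma_T(p,q)$, $k\sim p$, $l\sim q$ are drawn independently and told privately to players 1, 2; for $T$ stages both choose $a_t\in A,b_t\in B$ simultaneously, publicly announced; behavior strategies $\sigma_t:K\times A^{t-1}\times B^{t-1}\to\Delta(A)$, $\tau_t:L\times A^{t-1}\times B^{t-1}\to\Delta(B)$; payoff $\mathbb E[\sum_{t=1}^TM(k,l,a_t,b_t)]$ to player 1. Realization plans: the realization plan of $\sigma$ is $x^{a_t}_{k,h^A_t,h^B_t}=p^k\prod_{s=1}^t\sigma^{a_s}_s(k,h^A_s,h^B_s)$ for $t=1,\dots,T$, $h_t^A=(a_1,\dots,a_{t-1})$, $h_t^B=(b_1,\dots,b_{t-1})$ and prefixes $h_s$; $x_{k,h^A,h^B}\in\mathbb R^{|A|}$ is the vector over the last action. $X_T(p)$ is the set of such families satisfying $x\ge0$, $\mathbf1^Tx_{k,\emptyset,\emptyset}=p^k$, $\mathbf1^Tx_{k,(h^A,a),(h^B,b)}=x^a_{k,h^A,h^B}$ (concatenated histories); each $x\in X_T(p)$ corresponds to a behavior strategy $\sigma$ via ratios. $Y_T(q)$, $y_{l,h^A,h^B}\in\mathbb R^{|B|}$ are defined symmetrically for player 2. Weighted future security payoffs: for $x\in X_T(p)$ with strategy $\sigma$,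 $t\in\{1,\dots,T-1\}$, $h^A\in A^{t-1},h^B\in B^{t-1}$, $a,b$: $u^{a,b}_{l,h^A,h^B}(x)=\min_{\tau_{t+1:T}(l)}\sum_kx^a_{k,h^A,h^B}\,\mathbb E[\sum_{s=t+1}^TM(k,l,a_s,b_s)\mid k,l,h^A_{t+1}=(h^A,a),h^B_{t+1}=(h^B,b)]$, minimum over behavior strategies of player 2 of type $l$ at stages $t+1,\dots,T$; $u_{l,h^A,h^B}(x)$ denotes the $|A|\times|B|$ matrix with these entries; $u_{l,h^A,h^B}(x)=0$ for histories of length $T-1$ (i.e. stage $T$); and $u_{l,0}(x)=\min_{\tau(l)}\sum_kp^k\mathbb E[\sum_{s=1}^TM(k,l,a_s,b_s)\mid k,l]$. Symmetrically, for $y\in Y_T(q)$ with strategy $\tau$: $w^{a,b}_{k,h^A,h^B}(y)=\max_{\sigma_{t+1:T}(k)}\sum_ly^b_{l,h^A,h^B}\,\mathbb E[\sum_{s=t+1}^TM\mid k,l,(h^A,a),(h^B,b)]$, the matrix $w_{k,h^A,h^B}(y)$ (zero at stage $T$), and $w_{k,0}(y)=\max_{\sigma(k)}\sum_lq^l\mathbb E[\sum_{s=1}^TM\mid k,l]$. *)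

From HB Require Import structures.
From mathcomp Require Import all_boot all_order all_algebra.
From mathcomp Require Import classical_sets reals.
Set Implicit Arguments. Unset Strict Implicit. Unset Printing Implicit Defensive.
Import Order.TTheory GRing.Theory Num.Theory.
Local Open Scope classical_set_scope.
Local Open Scope ring_scope.

Section Game.
Variables (R : realType) (K L A B : finType).

Definition in_simplex (C : finType) (s : C -> R) : Prop :=
  (forall c, 0 <= s c) /\ \sum_(c : C) s c = 1.

Definition min_simplex (C : finType) (c : C -> R) : R :=
  inf [set v | exists tau : C -> R, in_simplex tau /\ v = \sum_(b : C) c b * tau b].
Definition max_simplex (C : finType) (c : C -> R) : R :=
  sup [set v | exists sig : C -> R, in_simplex sig /\ v = \sum_(a : C) sig a * c a].

(* Realization plans.  x k hA hB a = x^a_{k,hA,hB}, meaningful for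
   size hA = size hB = t-1 with t = 1..T; (h,a) is  rcons h a. *)
Definition realization_plan1 (T : nat) (p : K -> R)
  (x : K -> seq A -> seq B -> A -> R) : Prop :=
  [/\ forall k hA hB a, size hA = size hB -> (size hA < T)%N -> 0 <= x k hA hB a,
      forall k, \sum_(a : A) x k [::] [::] a = p k &
      forall k hA hB a b, size hA = size hB -> ((size hA).+1 < T)%N ->
        \sum_(a' : A) x k (rcons hA a) (rcons hB b) a' = x k hA hB a].

Definition realization_plan2 (T : nat) (q : L -> R)
  (y : L -> seq A -> seq B -> B -> R) : Prop :=
  [/\ forall l hA hB b, size hA = size hB -> (size hA < T)%N -> 0 <= y l hA hB b,
      forall l, \sum_(b : B) y l [::] [::] b = q l &
      forall l hA hB a b, size hA = size hB -> ((size hA).+1 < T)%N ->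
        \sum_(b' : B) y l (rcons hA a) (rcons hB b) b' = y l hA hB b].

Definition strat1 (sig : seq A -> seq B -> A -> R) : Prop :=
  forall hA hB, in_simplex (sig hA hB).
Definition strat2 (tau : seq A -> seq B -> B -> R) : Prop :=
  forall hA hB, in_simplex (tau hA hB).

(* Behavior strategy induced by a realization plan via ratios
   sigma_t^{a}(k,hA,hB) = x^a_{k,hA,hB} / x^{a_{t-1}}_{k,h^A_{t-1},h^B_{t-1}}
   (parent value p^k at the root); uniform when the parent weight is 0. *)
Definition parent1 (p : K -> R) (x : K -> seq A -> seq B -> A -> R)
  (k : K) (hA : seq A) (hB : seq B) : R :=
  match hA, hB with
  | a1 :: hA', b1 :: hB' => x k (belast a1 hA') (belast b1 hB') (last a1 hA')
  | _, _ => p k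
  end.
Definition beh1 (p : K -> R) (x : K -> seq A -> seq B -> A -> R) (k : K)
  : seq A -> seq B -> A -> R :=
  fun hA hB a => let d := parent1 p x k hA hB in
    if d == 0 then #|A|%:R^-1 else x k hA hB a / d.

Definition parent2 (q : L -> R) (y : L -> seq A -> seq B -> B -> R)
  (l : L) (hA : seq A) (hB : seq B) : R :=
  match hA, hB with
  | a1 :: hA', b1 :: hB' => y l (belast a1 hA') (belast b1 hB') (last b1 hB')
  | _, _ => q l
  end.
Definition beh2 (q : L -> R) (y : L -> seq A -> seq B -> B -> R) (l : L)
  : seq A -> seq B -> B -> R :=
  fun hA hB b => let d := parent2 q y l hA hB in
    if d == 0 then #|B|%:R^-1 else y l hA hB b / d.

(* Conditional expectation, given the types (through m = M(k,l,.,.)) and the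
   current public history (hA,hB), of the sum of the payoffs of the next n
   stages when the players use behavior strategies sig and tau. *)
Fixpoint cont_payoff (n : nat) (sig : seq A -> seq B -> A -> R)
  (tau : seq A -> seq B -> B -> R) (m : A -> B -> R) (hA : seq A) (hB : seq B) : R :=
  match n with
  | 0 => 0
  | n'.+1 => \sum_(a : A) \sum_(b : B) sig hA hB a * tau hA hB b *
              (m a b + cont_payoff n' sig tau m (rcons hA a) (rcons hB b))
  end.

Variables (T : nat) (M : K -> L -> A -> B -> R) (p : K -> R) (q : L -> R).

(* u^{a,b}_{l,hA,hB}(x), with t = size hA + 1; zero at stage T. *)
Definition u_ab (x : K -> seq A -> seq B -> A -> R) (l : L)
  (hA : seq A) (hB : seq B) (a : A) (b : B) : R :=
  if ((size hA).+1 < T)%N then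
    inf [set v | exists tau, strat2 tau /\
      v = \sum_(k : K) x k hA hB a *
            cont_payoff (T - (size hA).+1) (beh1 p x k) tau (M k l)
              (rcons hA a) (rcons hB b)]
  else 0.

Definition u_0 (x : K -> seq A -> seq B -> A -> R) (l : L) : R :=
  inf [set v | exists tau, strat2 tau /\
    v = \sum_(k : K) p k * cont_payoff T (beh1 p x k) tau (M k l) [::] [::]].

Definition w_ab (y : L -> seq A -> seq B -> B -> R) (k : K)
  (hA : seq A) (hB : seq B) (a : A) (b : B) : R :=
  if ((size hA).+1 < T)%N then
    sup [set v | exists sig, strat1 sig /\
      v = \sum_(l : L) y l hA hB b *
            cont_payoff (T - (size hA).+1) sig (beh2 q y l) (M k l)
              (rcons hA a) (rcons hB b)]
  else 0.

Definition w_0 (y : L -> seq A -> seq B -> B -> R) (k : K) : R :=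
  sup [set v | exists sig, strat1 sig /\
    v = \sum_(l : L) q l * cont_payoff T sig (beh2 q y l) (M k l) [::] [::]].

End Game.

(* After the first stage the
   continuation problems indexed by the public moves (a, b) are independent,
   so grafting near-optimal continuations onto any mixed action of the current
   stage shows that the minimum splits into a one-stage minimum over Delta(B)
   of the immediate payoff plus the continuation values; the reverse
   inequality is immediate.  The continuation problem after (a, b) carries the
   type weights x_{k,h}^a, since multiplying the parent weight by the induced
   behaviour probability gives back the realization plan.  The statements for
   w follow by applying those for u to the game in which the players exchange
   roles and the payoff is negated. *)

From HB Require Import structures.
From mathcomp Require Import all_boot all_order all_algebra.
From mathcomp Require Import classical_sets reals boolp.
From mathcomp Require Import ring zify.
Set Implicit Arguments. Unset Strict Implicit. Unset Printing Implicit Defensive.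
Import Order.TTheory GRing.Theory Num.Theory.
Local Open Scope classical_set_scope.
Local Open Scope ring_scope.

Section Simplex.
Variables (R : realType) (C : finType).
Implicit Types (s d : C -> R).

Lemma simplex_le1 s c : in_simplex s -> s c <= 1.
Proof. by case=> s_ge0 <-; rewrite (bigD1 c) //= lerDl sumr_ge0. Qed.

Lemma sumr_uniform (e : R) : (0 < #|C|)%N -> \sum_(c : C) e / #|C|%:R = e.
Proof.
move=> C0; rewrite sumr_const -[_ *+ _]mulr_natr (_ : #|xpredT| = #|C|) //.
by rewrite divfK // pnatr_eq0 -lt0n.
Qed.

Lemma in_simplex_uniform : (0 < #|C|)%N -> in_simplex (fun _ : C => (#|C|%:R : R)^-1).
Proof.
move=> C0; split=> [c|]; first by rewrite invr_ge0 ler0n.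
by rewrite -[RHS](sumr_uniform 1 C0); apply: eq_bigr => c _; rewrite mul1r.
Qed.

Lemma min_simplex_le d s : in_simplex s -> min_simplex d <= \sum_c d c * s c.
Proof.
move=> sS; apply: ge_inf; last by exists s.
exists (- \sum_c `|d c|) => _ [s' [s'S ->]]; rewrite -sumrN; apply: ler_sum => c _.
have s'0 := s'S.1 c; have s'1 := simplex_le1 c s'S.
rewrite lerNl -mulNr; apply: le_trans (ler_norm _) _.
by rewrite normrM normrN [`|s' c|]ger0_norm // ler_piMr.
Qed.

Lemma min_simplex_ge d (v : R) : (0 < #|C|)%N ->
  (forall s, in_simplex s -> v <= \sum_c d c * s c) -> v <= min_simplex d.
Proof.
move=> C0 v_le; apply: lb_le_inf => [|_ [s [sS ->]]]; last exact: v_le.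
by eexists; exists (fun _ => #|C|%:R^-1); split; [exact: in_simplex_uniform|].
Qed.

Lemma sup_inf_opp (E : set R) : sup E = - inf [set - v | v in E].
Proof.
rewrite /inf opprK; congr sup; apply/seteqP; split => v.
  by move=> Ev; exists (- v); [exists v|rewrite opprK].
by move=> [_ [u Eu <-] <-]; rewrite opprK.
Qed.

Lemma max_simplexE d : max_simplex d = - min_simplex (fun c => - d c).
Proof.
rewrite /max_simplex /min_simplex sup_inf_opp; congr (- inf _).
have sumN s : - \sum_c s c * d c = \sum_c - d c * s c.
  by rewrite -sumrN; apply: eq_bigr => c _; rewrite mulNr mulrC.
apply/seteqP; split => v.
  by move=> [_ [s [sS ->]] <-]; exists s; rewrite sumN.
by move=> [s [sS ->]]; exists (\sum_c s c * d c); [exists s | rewrite sumN].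
Qed.

End Simplex.

Section ContinuationPayoff.
Variables (R : realType) (A B : finType).
Implicit Types (sig : seq A -> seq B -> A -> R) (tau : seq A -> seq B -> B -> R).
Implicit Types (m : A -> B -> R) (hA : seq A) (hB : seq B).

Lemma sum_product_simplex (s : A -> R) (t : B -> R) (c : R) :
  in_simplex s -> in_simplex t -> \sum_a \sum_b s a * t b * c = c.
Proof.
move=> [_ s1] [_ t1].
under eq_bigr do rewrite -big_distrl -big_distrr /= t1 mulr1.
by rewrite -big_distrl /= s1 mul1r.
Qed.

Lemma cont_payoff_local n sig tau tau' m hA hB :
  (forall sA sB, tau (hA ++ sA) (hB ++ sB) = tau' (hA ++ sA) (hB ++ sB)) ->
  cont_payoff n sig tau m hA hB = cont_payoff n sig tau' m hA hB.
Proof.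
elim: n hA hB => [//|n IH] hA hB tau_eq /=.
have := tau_eq [::] [::]; rewrite !cats0 => ->.
apply: eq_bigr => a _; apply: eq_bigr => b _; congr (_ * (_ + _)).
by apply: IH => sA sB; rewrite !cat_rcons.
Qed.

Lemma cont_payoff_bound N sig tau m :
  (forall hA hB, size hA = size hB -> (size hA < N)%N -> in_simplex (sig hA hB)) ->
  strat2 tau ->
  forall n hA hB, size hA = size hB -> (size hA + n <= N)%N ->
  `|cont_payoff n sig tau m hA hB| <= n%:R * \sum_a \sum_b `|m a b|.
Proof.
move=> sigS tauS; elim=> [|n IH] hA hB hAB hN /=; first by rewrite normr0 mul0r.
have sS : in_simplex (sig hA hB) by apply: sigS => //; lia.
have tS := tauS hA hB.
set C := \sum_a \sum_b `|m a b|.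
have stage_le a b : `|sig hA hB a * tau hA hB b *
    (m a b + cont_payoff n sig tau m (rcons hA a) (rcons hB b))|
    <= `|m a b| + sig hA hB a * tau hA hB b * (n%:R * C).
  have st0 : 0 <= sig hA hB a * tau hA hB b := mulr_ge0 (sS.1 a) (tS.1 b).
  have st1 : sig hA hB a * tau hA hB b <= 1.
    by apply: mulr_ile1; [exact: sS.1|exact: tS.1|exact: simplex_le1|exact: simplex_le1].
  rewrite normrM ger0_norm //; apply: le_trans (ler_wpM2l st0 (ler_normD _ _)) _.
  rewrite mulrDr lerD ?ler_piMl //; apply: (ler_wpM2l st0).
  by apply: IH; rewrite ?size_rcons; lia.
apply: le_trans (ler_norm_sum _ _ _) _.
apply: le_trans (ler_sum _ (fun a _ => ler_norm_sum _ _ _)) _.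
apply: le_trans (ler_sum _ (fun a _ => ler_sum _ (fun b _ => stage_le a b))) _.
under eq_bigr do rewrite big_split /=.
by rewrite big_split /= sum_product_simplex // -nat1r mulrDl mul1r.
Qed.

Definition uniform_strat2 : seq A -> seq B -> B -> R := fun _ _ _ => #|B|%:R^-1.

Lemma strat2_uniform : (0 < #|B|)%N -> strat2 uniform_strat2.
Proof. by move=> B0 hA hB; apply: in_simplex_uniform. Qed.

(* Play [t0] at [(hA, hB)] itself and [tf a b] after the first moves [(a, b)]. *)
Definition graft_strat2 hA hB (t0 : B -> R)
    (tf : A -> B -> seq A -> seq B -> B -> R) : seq A -> seq B -> B -> R :=
  fun hA' hB' => match drop (size hA) hA', drop (size hB) hB' with
    | a :: _, b :: _ => tf a b hA' hB'
    | _, _ => t0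
    end.

Lemma graft_strat2_root hA hB t0 tf : graft_strat2 hA hB t0 tf hA hB = t0.
Proof. by rewrite /graft_strat2 !drop_size. Qed.

Lemma strat2_graft hA hB t0 tf :
  in_simplex t0 -> (forall a b, strat2 (tf a b)) -> strat2 (graft_strat2 hA hB t0 tf).
Proof.
move=> t0S tfS hA' hB'; rewrite /graft_strat2.
case: (drop _ hA') => [|a ?]; first exact: t0S.
by case: (drop _ hB') => [|b ?]; [exact: t0S | exact: tfS].
Qed.

Lemma cont_payoff_graft n sig m hA hB t0 tf a b :
  cont_payoff n sig (graft_strat2 hA hB t0 tf) m (rcons hA a) (rcons hB b) =
  cont_payoff n sig (tf a b) m (rcons hA a) (rcons hB b).
Proof.
apply: cont_payoff_local => sA sB.
by rewrite /graft_strat2 !cat_rcons !drop_size_cat.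
Qed.

End ContinuationPayoff.

Arguments uniform_strat2 {R A B}.

Section SecurityValue.
Variables (R : realType) (A B I : finType) (N : nat).
Variables (sig : I -> seq A -> seq B -> A -> R) (m : I -> A -> B -> R).
Hypothesis sig_simplex : forall i hA hB,
  size hA = size hB -> (size hA < N)%N -> in_simplex (sig i hA hB).
Hypothesis B0 : (0 < #|B|)%N.
Implicit Types (w : I -> R) (tau : seq A -> seq B -> B -> R) (hA : seq A) (hB : seq B).

Definition weighted_payoff w n tau hA hB : R :=
  \sum_i w i * cont_payoff n (sig i) tau (m i) hA hB.

Definition security_set w n hA hB : set R :=
  [set v | exists tau, strat2 tau /\ v = weighted_payoff w n tau hA hB].

Definition security_value w n hA hB : R := inf (security_set w n hA hB).

Definition next_weight w hA hB (a : A) : I -> R := fun i => w i * sig i hA hB a.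

Definition bellman_payoff w n hA hB : B -> R := fun b =>
  \sum_i \sum_a next_weight w hA hB a i * m i a b +
  \sum_a security_value (next_weight w hA hB a) n (rcons hA a) (rcons hB b).

Lemma security_set_has_inf w n hA hB :
  size hA = size hB -> (size hA + n <= N)%N -> has_inf (security_set w n hA hB).
Proof.
move=> hAB hN; split; first by eexists; exists uniform_strat2; split; [exact: strat2_uniform|].
exists (- \sum_i `|w i| * (n%:R * \sum_a \sum_b `|m i a b|)) => _ [tau [tauS ->]].
rewrite -sumrN; apply: ler_sum => i _; rewrite lerNl -mulNr.
apply: le_trans (ler_norm _) _; rewrite normrM normrN ler_wpM2l //.
exact: (cont_payoff_bound (m i) (sig_simplex i) tauS).
Qed.

Lemma security_value_le w n tau hA hB :
  size hA = size hB -> (size hA + n <= N)%N -> strat2 tau ->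
  security_value w n hA hB <= weighted_payoff w n tau hA hB.
Proof.
move=> hAB hN tauS; apply: ge_inf; last by exists tau.
by case: (security_set_has_inf w hAB hN).
Qed.

Lemma security_value0 w hA hB : security_value w 0 hA hB = 0.
Proof.
rewrite /security_value (_ : security_set _ _ _ _ = [set 0]) ?inf1 //.
have payoff0 tau : weighted_payoff w 0 tau hA hB = 0.
  by rewrite /weighted_payoff big1 // => i _; rewrite mulr0.
apply/seteqP; split => v; first by move=> [tau [_ ->]]; rewrite payoff0.
by move=> ->; exists uniform_strat2; rewrite payoff0; split; [exact: strat2_uniform|].
Qed.

Lemma weighted_payoffS w n tau hA hB :
  weighted_payoff w n.+1 tau hA hB =
  \sum_b (\sum_i \sum_a next_weight w hA hB a i * m i a b +
          \sum_a weighted_payoff (next_weight w hA hB a) n tau (rcons hA a) (rcons hB b))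
         * tau hA hB b.
Proof.
rewrite /weighted_payoff /next_weight /=.
under [RHS]eq_bigr do
  rewrite (exchange_big _ _ _ _ _ (fun a i => _ * _)) -big_split big_distrl /=.
transitivity (\sum_i \sum_a \sum_b w i * (sig i hA hB a * tau hA hB b *
    (m i a b + cont_payoff n (sig i) tau (m i) (rcons hA a) (rcons hB b)))).
  by apply: eq_bigr => i _; rewrite big_distrr; apply: eq_bigr => a _; rewrite big_distrr.
rewrite exchange_big [RHS]exchange_big; apply: eq_bigr => a _ /=.
rewrite exchange_big; apply: eq_bigr => b _ /=.
by rewrite -big_split big_distrl /=; apply: eq_bigr => i _; ring.
Qed.

Lemma bellman_le_security_value w n hA hB :
  size hA = size hB -> (size hA + n.+1 <= N)%N ->
  min_simplex (bellman_payoff w n hA hB) <= security_value w n.+1 hA hB.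
Proof.
move=> hAB hN; apply: lb_le_inf; first by case: (security_set_has_inf w hAB hN).
move=> _ [tau [tauS ->]]; rewrite weighted_payoffS.
apply: le_trans (min_simplex_le _ (tauS hA hB)) _.
apply: ler_sum => b _; apply: ler_wpM2r; first exact: (tauS hA hB).1.
rewrite lerD2l; apply: ler_sum => a _.
by apply: (security_value_le _ _ _ tauS); rewrite !size_rcons; lia.
Qed.

Lemma security_value_le_bellman w n hA hB : (0 < #|A|)%N ->
  size hA = size hB -> (size hA + n.+1 <= N)%N ->
  security_value w n.+1 hA hB <= min_simplex (bellman_payoff w n hA hB).
Proof.
move=> A0 hAB hN; apply: min_simplex_ge => // t0 t0S; apply/ler_addgt0Pr => e e0.
pose eA := e / #|A|%:R.
have eA0 : 0 < eA by rewrite divr_gt0 ?ltr0n.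
pose next a := next_weight w hA hB a.
have near_opt (ab : A * B) : exists tau, strat2 tau /\
    weighted_payoff (next ab.1) n tau (rcons hA ab.1) (rcons hB ab.2)
    < security_value (next ab.1) n (rcons hA ab.1) (rcons hB ab.2) + eA.
  have hAB' : size (rcons hA ab.1) = size (rcons hB ab.2) by rewrite !size_rcons hAB.
  have hN' : (size (rcons hA ab.1) + n <= N)%N by rewrite size_rcons; lia.
  have [_ [tau [tauS ->]] lt] := inf_adherent eA0 (security_set_has_inf (next ab.1) hAB' hN').
  by exists tau.
have [tf tfP] := choice near_opt.
pose tau := graft_strat2 hA hB t0 (fun a b => tf (a, b)).
have tauS : strat2 tau by apply: strat2_graft => // a b; exact: (tfP (a, b)).1.
apply: le_trans (security_value_le w hAB hN tauS) _.
rewrite weighted_payoffS /tau graft_strat2_root.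
(* Spread [e] over the stage as [\sum_b t0 b * \sum_a eA]. *)
rewrite -[e in X in _ <= X](mulr1 e) -t0S.2 mulr_sumr -big_split /=.
apply: ler_sum => b _; rewrite -mulrDl; apply: ler_wpM2r; first exact: t0S.1.
rewrite /bellman_payoff -addrA lerD2l -(sumr_uniform e A0) -big_split /=.
apply: ler_sum => a _; rewrite /weighted_payoff.
under eq_bigr do rewrite cont_payoff_graft.
exact: ltW (tfP (a, b)).2.
Qed.

Lemma security_valueS w n hA hB : (0 < #|A|)%N ->
  size hA = size hB -> (size hA + n.+1 <= N)%N ->
  security_value w n.+1 hA hB = min_simplex (bellman_payoff w n hA hB).
Proof.
move=> A0 hAB hN; apply/le_anti/andP; split.
  exact: security_value_le_bellman.
exact: bellman_le_security_value.
Qed.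

End SecurityValue.

Section BehaviorOfPlan.
Variables (R : realType) (K A B : finType) (T : nat).
Variables (p : K -> R) (x : K -> seq A -> seq B -> A -> R).
Hypothesis p_gt0 : forall k, 0 < p k.
Hypothesis x_plan : realization_plan1 T p x.
Implicit Types (hA : seq A) (hB : seq B).

Lemma parent1_rcons k hA hB a b : parent1 p x k (rcons hA a) (rcons hB b) = x k hA hB a.
Proof.
by case: hA => [|a1 hA]; case: hB => [|b1 hB] //=; rewrite ?belast_rcons ?last_rcons.
Qed.

Lemma parent1_nonneg_sum k hA hB : size hA = size hB -> (size hA < T)%N ->
  0 <= parent1 p x k hA hB /\ \sum_a x k hA hB a = parent1 p x k hA hB.
Proof.
case: x_plan => x_ge0 x_root x_sum.
case/lastP: hA => [|hA a]; case/lastP: hB => [|hB b]; rewrite ?size_rcons //=.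
  by split; [exact: ltW | exact: x_root].
move=> [hAB] hT; rewrite parent1_rcons x_sum //; split=> //.
by apply: x_ge0 => //; lia.
Qed.

Lemma beh1_simplex k hA hB : (0 < #|A|)%N ->
  size hA = size hB -> (size hA < T)%N -> in_simplex (beh1 p x k hA hB).
Proof.
move=> A0 hAB hT; have [d_ge0 d_sum] := parent1_nonneg_sum k hAB hT.
rewrite /beh1; case: eqP => [_|/eqP d0]; first exact: in_simplex_uniform.
split=> [a|]; last by rewrite -mulr_suml d_sum mulfV.
by rewrite divr_ge0 //; case: x_plan => x_ge0 _ _; apply: x_ge0.
Qed.

Lemma parent1_beh1 k hA hB a : size hA = size hB -> (size hA < T)%N ->
  parent1 p x k hA hB * beh1 p x k hA hB a = x k hA hB a.
Proof.
move=> hAB hT; have [_ d_sum] := parent1_nonneg_sum k hAB hT.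
rewrite /beh1; case: eqP => [d0|/eqP d0]; last by rewrite mulrCA mulfV ?mulr1.
have x_ge0 a' : 0 <= x k hA hB a' by case: x_plan => x_ge0 _ _; apply: x_ge0.
have sum0 : \sum_a' x k hA hB a' = 0 by rewrite d_sum.
by rewrite d0 mul0r (psumr_eq0P (fun a' _ => x_ge0 a') sum0).
Qed.

End BehaviorOfPlan.

Section SecurityRecursion.
Variables (R : realType) (K L A B : finType) (T : nat).
Variables (M : K -> L -> A -> B -> R) (p : K -> R) (x : K -> seq A -> seq B -> A -> R).
Hypotheses (A0 : (0 < #|A|)%N) (B0 : (0 < #|B|)%N).
Hypothesis p_gt0 : forall k, 0 < p k.
Hypothesis x_plan : realization_plan1 T p x.
Implicit Types (hA : seq A) (hB : seq B).

Lemma u_ab_security_value l hA hB a b :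
  u_ab T M p x l hA hB a b =
  security_value (beh1 p x) (fun k => M k l) (fun k => x k hA hB a)
    (T - (size hA).+1) (rcons hA a) (rcons hB b).
Proof.
rewrite /u_ab; case: ifP => // hT.
by rewrite (_ : T - _ = 0)%N ?security_value0 //; lia.
Qed.

Lemma security_value_plan l hA hB : size hA = size hB -> (size hA < T)%N ->
  security_value (beh1 p x) (fun k => M k l) (fun k => parent1 p x k hA hB)
    (T - size hA) hA hB =
  min_simplex (fun b => \sum_k \sum_a x k hA hB a * M k l a b +
                        \sum_a u_ab T M p x l hA hB a b).
Proof.
move=> hAB hT; rewrite (_ : T - size hA = (T - (size hA).+1).+1)%N; last by lia.
rewrite (security_valueS (N := T)) //; last by lia.
  congr min_simplex; apply: funext => b; rewrite /bellman_payoff /next_weight.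
  under eq_bigr do under eq_bigr do rewrite (parent1_beh1 p_gt0 x_plan) //.
  congr (_ + _); apply: eq_bigr => a _; rewrite u_ab_security_value.
  by congr security_value; apply: funext => k; rewrite (parent1_beh1 p_gt0 x_plan).
by move=> k hA' hB'; apply: (beh1_simplex p_gt0 x_plan).
Qed.

Lemma u_root l : (0 < T)%N ->
  u_0 T M p x l =
  min_simplex (fun b => \sum_k \sum_a x k [::] [::] a * M k l a b +
                        \sum_a u_ab T M p x l [::] [::] a b).
Proof.
by move=> T0; rewrite -security_value_plan //= subn0.
Qed.

Lemma u_stage l hA hB a b : size hA = size hB -> ((size hA).+1 < T)%N ->
  u_ab T M p x l hA hB a b =
  min_simplex (fun b' =>
    \sum_k \sum_a' x k (rcons hA a) (rcons hB b) a' * M k l a' b' +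
    \sum_a' u_ab T M p x l (rcons hA a) (rcons hB b) a' b').
Proof.
move=> hAB hT; have hAB' : size (rcons hA a) = size (rcons hB b) by rewrite !size_rcons hAB.
rewrite -(security_value_plan _ hAB') ?size_rcons // u_ab_security_value.
by congr security_value; apply: funext => k; rewrite parent1_rcons.
Qed.

End SecurityRecursion.

Definition swap_hist (S A B C : Type) (f : seq A -> seq B -> C -> S) : seq B -> seq A -> C -> S :=
  fun hB hA => f hA hB.

Section Duality.
Variables (R : realType) (K L A B : finType) (T : nat).
Variables (M : K -> L -> A -> B -> R) (q : L -> R) (y : L -> seq A -> seq B -> B -> R).
Implicit Types (hA : seq A) (hB : seq B).

(* Player 2's problem for type [k], as a minimization problem of the first
   player with the single opponent type [tt]. *)
Definition dual_payoff (k : K) : L -> unit -> B -> A -> R := fun l _ b a => - M k l a b.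

Definition dual_plan : L -> seq B -> seq A -> B -> R := fun l => swap_hist (y l).

Lemma cont_payoff_swap n (sig : seq A -> seq B -> A -> R) tau (m : A -> B -> R) hA hB :
  cont_payoff n sig tau m hA hB =
  - cont_payoff n (swap_hist tau) (swap_hist sig) (fun b a => - m a b) hB hA.
Proof.
elim: n hA hB => [|n IH] hA hB /=; first by rewrite oppr0.
rewrite exchange_big -sumrN; apply: eq_bigr => b _; rewrite -sumrN.
by apply: eq_bigr => a _; rewrite IH /swap_hist; ring.
Qed.

Lemma realization_plan2_dual : realization_plan2 T q y -> realization_plan1 T q dual_plan.
Proof.
case=> y_ge0 y_root y_sum; split=> [l hB hA b hBA|//|l hB hA b a hBA] hT.
  by apply: y_ge0; rewrite -?hBA.
by apply: y_sum; rewrite -?hBA.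
Qed.

Lemma beh2_dual l : beh2 q y l = swap_hist (beh1 q dual_plan l).
Proof.
apply: funext => hA; apply: funext => hB; rewrite /beh2 /beh1 /swap_hist.
by case: hA => [|a1 hA]; case: hB => [|b1 hB].
Qed.

Lemma security_set_dual (k : K) n (w : L -> R) hA hB :
  [set - v | v in [set v | exists sig, strat1 sig /\
     v = \sum_l w l * cont_payoff n sig (beh2 q y l) (M k l) hA hB]] =
  security_set (beh1 q dual_plan) (fun l => dual_payoff k l tt) w n hB hA.
Proof.
have dual_value sig : \sum_l w l * cont_payoff n sig (beh2 q y l) (M k l) hA hB =
    - weighted_payoff (beh1 q dual_plan) (fun l => dual_payoff k l tt) w n (swap_hist sig) hB hA.
  rewrite -sumrN; apply: eq_bigr => l _.
  by rewrite cont_payoff_swap beh2_dual mulrN.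
apply/seteqP; split=> [_ [_ [sig [sigS ->]] <-]|v [tau [tauS ->]]].
  by exists (swap_hist sig); split=> [hB' hA'|]; [exact: sigS | rewrite dual_value opprK].
exists (- weighted_payoff (beh1 q dual_plan) (fun l => dual_payoff k l tt) w n tau hB hA); last first.
  by rewrite opprK.
by exists (swap_hist tau); split=> [hA' hB'|]; [exact: tauS | rewrite dual_value].
Qed.

Lemma w_0_dual k : w_0 T M q y k = - u_0 T (dual_payoff k) q dual_plan tt.
Proof. by rewrite /w_0 sup_inf_opp security_set_dual. Qed.

Lemma w_ab_dual k hA hB a b : size hA = size hB ->
  w_ab T M q y k hA hB a b = - u_ab T (dual_payoff k) q dual_plan tt hB hA b a.
Proof.
move=> hAB; rewrite /w_ab /u_ab -hAB; case: ifP => _; last by rewrite oppr0.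
by rewrite sup_inf_opp security_set_dual.
Qed.

Lemma dual_stage_payoff k hA hB a :
  \sum_l \sum_b dual_plan l hB hA b * dual_payoff k l tt b a =
  - \sum_l \sum_b M k l a b * y l hA hB b.
Proof.
rewrite -sumrN; apply: eq_bigr => l _; rewrite -sumrN.
by apply: eq_bigr => b _; rewrite mulrN mulrC.
Qed.

End Duality.

Section MaxRecursion.
Variables (R : realType) (K L A B : finType) (T : nat).
Variables (M : K -> L -> A -> B -> R) (q : L -> R) (y : L -> seq A -> seq B -> B -> R).
Hypotheses (A0 : (0 < #|A|)%N) (B0 : (0 < #|B|)%N).
Hypothesis q_gt0 : forall l, 0 < q l.
Hypothesis y_plan : realization_plan2 T q y.
Implicit Types (hA : seq A) (hB : seq B).

Let dual_y_plan := realization_plan2_dual y_plan.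

Lemma w_root k : (0 < T)%N ->
  w_0 T M q y k =
  max_simplex (fun a => \sum_l \sum_b M k l a b * y l [::] [::] b +
                        \sum_b w_ab T M q y k [::] [::] a b).
Proof.
move=> T0; rewrite w_0_dual (u_root _ B0 A0 q_gt0 dual_y_plan) // max_simplexE.
congr (- min_simplex _); apply: funext => a; rewrite dual_stage_payoff opprD.
by congr (_ + _); rewrite -sumrN; apply: eq_bigr => b _; rewrite w_ab_dual // opprK.
Qed.

Lemma w_stage k hA hB a b : size hA = size hB -> ((size hA).+1 < T)%N ->
  w_ab T M q y k hA hB a b =
  max_simplex (fun a' =>
    \sum_l \sum_b' M k l a' b' * y l (rcons hA a) (rcons hB b) b' +
    \sum_b' w_ab T M q y k (rcons hA a) (rcons hB b) a' b').
Proof.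
move=> hAB hT; rewrite w_ab_dual // (u_stage _ B0 A0 q_gt0 dual_y_plan) -?hAB //.
rewrite max_simplexE; congr (- min_simplex _); apply: funext => a'.
rewrite dual_stage_payoff opprD; congr (_ + _); rewrite -sumrN; apply: eq_bigr => b' _.
by rewrite w_ab_dual ?opprK // !size_rcons hAB.
Qed.

End MaxRecursion.

Theorem lemma1 (R : realType) (K L A B : finType)
  (M : K -> L -> A -> B -> R) (p : K -> R) (q : L -> R) (T : nat)
  (x : K -> seq A -> seq B -> A -> R) (y : L -> seq A -> seq B -> B -> R) :
  (0 < #|A|)%N -> (0 < #|B|)%N -> (0 < T)%N ->
  (forall k, 0 < p k) -> \sum_(k : K) p k = 1 ->
  (forall l, 0 < q l) -> \sum_(l : L) q l = 1 ->
  realization_plan1 T p x -> realization_plan2 T q y ->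
  [/\ (forall l : L,
        u_0 T M p x l =
        min_simplex (fun b : B =>
          \sum_(k : K) \sum_(a : A) x k [::] [::] a * M k l a b
          + \sum_(a : A) u_ab T M p x l [::] [::] a b)),
      (forall k : K,
        w_0 T M q y k =
        max_simplex (fun a : A =>
          \sum_(l : L) \sum_(b : B) M k l a b * y l [::] [::] b
          + \sum_(b : B) w_ab T M q y k [::] [::] a b)),
      (forall (l : L) (t : nat) (hA : seq A) (hB : seq B) (a : A) (b : B),
        (1 <= t)%N -> (t <= T - 1)%N -> size hA = t.-1 -> size hB = t.-1 ->
        u_ab T M p x l hA hB a b =
        min_simplex (fun b' : B =>
          \sum_(k : K) \sum_(a' : A) x k (rcons hA a) (rcons hB b) a' * M k l a' b'
          + \sum_(a' : A) u_ab T M p x l (rcons hA a) (rcons hB b) a' b')) &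
      (forall (k : K) (t : nat) (hA : seq A) (hB : seq B) (a : A) (b : B),
        (1 <= t)%N -> (t <= T - 1)%N -> size hA = t.-1 -> size hB = t.-1 ->
        w_ab T M q y k hA hB a b =
        max_simplex (fun a' : A =>
          \sum_(l : L) \sum_(b' : B) M k l a' b' * y l (rcons hA a) (rcons hB b) b'
          + \sum_(b' : B) w_ab T M q y k (rcons hA a) (rcons hB b) a' b'))].
Proof.
move=> A0 B0 T0 p_gt0 _ q_gt0 _ x_plan y_plan; split.
- by move=> l; apply: u_root.
- by move=> k; apply: w_root.
- move=> l t hA hB a b t1 tT hAt hBt.
  by apply: u_stage => //; rewrite ?hAt ?hBt //; lia.
- move=> k t hA hB a b t1 tT hAt hBt.
  by apply: w_stage => //; rewrite ?hAt ?hBt //; lia.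
Qed.
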